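(* Let $\gamma > 1$ and let $I$ be a $\gamma$-stable instance of the metric Steiner tree problem with optimal Steiner tree $\mathrm{OPT}$. Then every Steiner point $s$ that is a vertex of $\mathrm{OPT}$ has degree in $\mathrm{OPT}$ strictly greater than $\frac{2}{2 - \gamma}$.
   Context: An instance of the metric Steiner tree problem consists of a finite set $V$ of points of a metric space with metric $d$, a set $T \subseteq V$ of terminals, and the complete graph on $V$ with edge weights $w_{uv} = d(u,v)$. Points of $V \setminus T$ are Steiner points. A Steiner tree is a tree in this complete graph whose vertex set contains all of $T$; its weight is the sum of its edge weights. For $\gamma > 1$, the instance is $\gamma$-stable if it has a minimum-weight Steiner tree $\mathrm{OPT}$ such that for every $w' : V \times V \to \mathbb{R}_{\ge 0}$ with $w_{uv} \le w'_{uv} \le \gamma w_{uv}$ for all $u,v$, every minimum-weight Steiner tree with respect to $w'$ equals $\mathrm{OPT}$. *)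

From HB Require Import structures.
From mathcomp Require Import all_boot all_order all_algebra.
Set Implicit Arguments. Unset Strict Implicit. Unset Printing Implicit Defensive.
Import Order.TTheory GRing.Theory Num.Theory.
Local Open Scope ring_scope.

Definition is_metric (R : realFieldType) (V : finType) (d : V -> V -> R) : Prop :=
  [/\ (forall x y, 0 <= d x y),
      (forall x y, d x y = 0 <-> x = y),
      (forall x y, d x y = d y x) &
      (forall x y z, d x z <= d x y + d y z)].

(* Subgraphs of the complete graph on V: a pair (vertex set, edge set),
   edges being 2-element subsets of V. *)
Definition subgraph (V : finType) := ({set V} * {set {set V}})%type.

Definition adj (V : finType) (E : {set {set V}}) : rel V :=
  fun u v => (u != v) && ([set u; v] \in E).

Definition is_tree (V : finType) (G : subgraph V) : Prop :=
  [/\ G.1 != set0,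
      (forall e, e \in G.2 -> #|e| = 2 /\ e \subset G.1),
      (forall u v, u \in G.1 -> v \in G.1 -> connect (adj G.2) u v) &
      ~ (exists s : seq V, [/\ (3 <= size s)%N, uniq s & cycle (adj G.2) s])].

Definition is_steiner (V : finType) (T : {set V}) (G : subgraph V) : Prop :=
  is_tree G /\ T \subset G.1.

(* Weight of the edge {u,v} under the metric: d(u,v) (max over the pair). *)
Definition edge_len (R : realFieldType) (V : finType) (d : V -> V -> R)
  (e : {set V}) : R :=
  \big[Num.max/0]_(u in e) \big[Num.max/0]_(v in e) d u v.

Definition weight (R : realFieldType) (V : finType) (c : {set V} -> R)
  (G : subgraph V) : R := \sum_(e in G.2) c e.

Definition min_steiner (R : realFieldType) (V : finType) (T : {set V})
  (c : {set V} -> R) (G : subgraph V) : Prop :=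
  is_steiner T G /\ forall G', is_steiner T G' -> weight c G <= weight c G'.

Definition perturbation (R : realFieldType) (V : finType) (d : V -> V -> R)
  (gamma : R) (c : {set V} -> R) : Prop :=
  forall u v, u != v ->
    edge_len d [set u; v] <= c [set u; v] <= gamma * edge_len d [set u; v].

Definition stable (R : realFieldType) (V : finType) (d : V -> V -> R)
  (T : {set V}) (gamma : R) : Prop :=
  exists OPT : subgraph V,
    min_steiner T (edge_len d) OPT /\
    forall c, perturbation d gamma c ->
      forall G, min_steiner T c G -> G = OPT.

Definition deg (V : finType) (G : subgraph V) (s : V) : nat :=
  #|[set e in G.2 | s \in e]|.

From HB Require Import structures.
From mathcomp Require Import all_boot all_order all_algebra.
From mathcomp Require Import lra.
From Stdlib Require Import ClassicalEpsilon.
Set Implicit Arguments. Unset Strict Implicit. Unset Printing Implicit Defensive.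
Import Order.TTheory GRing.Theory Num.Theory.
Local Open Scope ring_scope.

(* If a Steiner vertex s of OPT had degree k <= 2 / (2 - gamma), lengthen every
   edge at s by the factor gamma; by stability OPT remains the unique optimum.
   But deleting s and joining its nearest neighbour u to its other k - 1
   neighbours costs, by the triangle inequality, at most
   (k - 2) d(s,u) + \sum_x d(s,x) <= gamma \sum_x d(s,x), the new cost of the
   star at s.  A spanning tree of the resulting connected graph is then a
   Steiner tree avoiding s and no more expensive than OPT, a contradiction. *)

Lemma ex_minimizer (T : finType) (disp : Order.disp_t) (O : orderType disp)
    (f : T -> O) (P : T -> Prop) x0 :
  P x0 -> exists2 x, P x & forall y, P y -> (f x <= f y)%O.
Proof.
move=> Px0.
pose b y : bool := if excluded_middle_informative (P y) then true else false.
have bP y : reflect (P y) (b y).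
  by rewrite /b; case: excluded_middle_informative => /= Py; constructor.
have bx0 : b x0 by apply/bP.
case: (arg_minP f bx0) => x /bP Px minx.
by exists x => // y /bP; apply: minx.
Qed.

Section Sums.
Variables (R : numDomainType) (I : finType).

Lemma ler_sum_subsetU (A B C : {set I}) (F : I -> R) :
  (forall i, 0 <= F i) -> C \subset A :|: B ->
  \sum_(i in C) F i <= \sum_(i in A) F i + \sum_(i in B) F i.
Proof.
move=> F0 /subsetP sCAB; rewrite !(big_mkcond (fun i => i \in _)) -big_split /=.
apply: ler_sum => i _; have := sCAB i; rewrite inE.
case: (i \in C) => [/(_ isT)|_]; last by rewrite addr_ge0 //; case: ifP.
by case/orP=> ->; case: ifP; rewrite ?addr0 ?add0r ?lerDl ?lerDr.
Qed.

End Sums.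

Section Metric.
Variables (R : realFieldType) (V : finType) (d : V -> V -> R).

Lemma edge_len_ge0 (e : {set V}) : 0 <= edge_len d e.
Proof. exact: bigmax_ge_id. Qed.

Lemma edge_len_set2 u v : is_metric d -> edge_len d [set u; v] = d u v.
Proof.
case=> d_ge0 d_eq0 dC _; have dxx x : d x x = 0 by apply/d_eq0.
apply/le_anti/andP; split.
  apply: bigmax_le => [|x /set2P[]->]; first exact: d_ge0;
  by apply: bigmax_le => [|y /set2P[]->]; rewrite ?d_ge0 ?dxx // dC.
by apply: (bigmax_sup u) (set21 u v) _; apply: (bigmax_sup v) (set22 u v) _.
Qed.

End Metric.

Section Graphs.
Variable V : finType.
Implicit Types (E F : {set {set V}}) (X : {set V}).

Lemma set2_inj (a : V) : injective (fun x => [set a; x]).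
Proof.
move=> x y /= Exy; have /set2P[xa|//] : x \in [set a; y] by rewrite -Exy set22.
by have /set2P[->|->] : y \in [set a; x] by rewrite Exy set22.
Qed.

Lemma adj_sym E : symmetric (adj E).
Proof. by move=> x y; rewrite /adj eq_sym setUC. Qed.

Lemma connect_adj_sym E : connect_sym (adj E).
Proof. exact/sym_connect_sym/adj_sym. Qed.

Lemma connect_homo (T T' : finType) (e : rel T) (e' : rel T') (f : T -> T') :
  (forall x y, e x y -> connect e' (f x) (f y)) ->
  forall x y, connect e x y -> connect e' (f x) (f y).
Proof.
move=> ee' x y /connectP[p]; elim: p x => [x _ -> //|z p IHp x /= /andP[xz zp] yl].
exact: connect_trans (ee' _ _ xz) (IHp z zp yl).
Qed.

Lemma cycle_edge_removable F a b p :
  uniq [:: a, b & p] -> p != [::] -> cycle (adj F) [:: a, b & p] ->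
  connect (adj (F :\ [set a; b])) b a.
Proof.
move=> + p0; have lp : last b p \in p by case: p p0 => // c p _; exact: (mem_last c p).
move=> /andP[a_bp /andP[b_p _]]; rewrite /= rcons_path => /and3P[_ bp pa].
have keep x y : x != a -> (y != a) || (x != b) -> adj F x y ->
    adj (F :\ [set a; b]) x y.
  move=> xa yaxb /andP[xy xyF]; rewrite /adj xy !inE xyF andbT /=.
  apply: contraTneq yaxb => Exy.
  have /set2P[ax|ay] : a \in [set x; y] by rewrite Exy set21.
    by rewrite ax eqxx in xa.
  have /set2P[bx|yb] : b \in [set x; y] by rewrite Exy set22.
    by rewrite -ay bx !eqxx.
  by move: a_bp; rewrite ay -yb inE eqxx.
apply/connectP; exists (rcons p a); last by rewrite last_rcons.
rewrite rcons_path; apply/andP; split.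
  apply: (sub_in_path (P := predC1 a) _ _ bp); last first.
    by apply/allP => x xbp /=; apply: contraNneq a_bp => <-.
  by move=> x y; rewrite !inE => xa ya; apply: keep; rewrite ?ya.
apply: keep pa; last by apply/orP; right; apply: contraNneq b_p => <-.
by apply: contraNneq a_bp => <-; rewrite inE lp orbT.
Qed.

Lemma connected_spanning_tree X E :
  X != set0 -> (forall e, e \in E -> #|e| = 2 /\ e \subset X) ->
  {in X &, forall u v, connect (adj E) u v} ->
  exists2 F : {set {set V}}, F \subset E & is_tree (X, F).
Proof.
move=> X0 EX Econn.
pose P F := F \subset E /\ {in X &, forall u v, connect (adj F) u v}.
have [F [FE Fconn] Fmin] := ex_minimizer (fun F => #|F|) (conj (subxx E) Econn : P E).
exists F => //; split => //= [e eF|[[|a [|b p]] [size_p uniq_p cyc_p]] //].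
  exact/EX/(subsetP FE).
have p0 : p != [::] by case: p size_p {uniq_p cyc_p}.
have eF : [set a; b] \in F by case/andP: cyc_p => /andP[].
have ba := cycle_edge_removable uniq_p p0 cyc_p.
have ab : connect (adj (F :\ [set a; b])) a b by rewrite connect_adj_sym.
suff /Fmin : P (F :\ [set a; b]).
  by rewrite leEnat (cardsD1 [set a; b] F) eF ltnn.
split; first exact: subset_trans (subsetDl _ _) FE.
move=> u v uX vX; apply: connect_sub (Fconn u v uX vX) => x y xyF.
case: (eqVneq [set x; y] [set a; b]) => [Exy|nExy]; last first.
  by apply: connect1; case/andP: xyF => xy xy_F; rewrite /adj xy !inE nExy xy_F.
have [/set2P[]-> /set2P[]-> //] : x \in [set a; b] /\ y \in [set a; b].
  by rewrite -Exy set21 set22.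
all: by rewrite /adj eqxx in xyF.
Qed.

Definition nbhd E (s : V) : {set V} := [set x | adj E s x].

Lemma nbhd_neq E s x : x \in nbhd E s -> x != s.
Proof. by rewrite inE eq_sym => /andP[]. Qed.

Lemma nbhd_nonempty E s t : t != s -> connect (adj E) s t -> nbhd E s != set0.
Proof.
move=> ts /connectP[[|x p] /= sp]; first by move=> tE; rewrite tE eqxx in ts.
by move=> _; apply/set0Pn; exists x; rewrite inE; case/andP: sp.
Qed.

Lemma edges_at_nbhd E s : (forall e, e \in E -> #|e| = 2) ->
  [set e in E | s \in e] = [set [set s; x] | x in nbhd E s].
Proof.
move=> E2; apply/setP => e; rewrite inE; apply/andP/imsetP => [[eE se]|[x]].
  have /eqP/cards2P[x [y [xy exy]]] := E2 e eE; subst e.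
  case/set2P: se => ->; first by exists y; rewrite // inE /adj xy.
  by exists x; rewrite 1?setUC // inE /adj eq_sym xy setUC.
by rewrite inE => /andP[_ sxE] ->; rewrite set21.
Qed.

Lemma deg_nbhd (G : subgraph V) s : (forall e, e \in G.2 -> #|e| = 2) ->
  deg G s = #|nbhd G.2 s|.
Proof. by move=> E2; rewrite /deg edges_at_nbhd // card_imset //; apply: set2_inj. Qed.

Definition contract_star E (s u : V) : {set {set V}} :=
  [set e in E | s \notin e] :|: [set [set u; x] | x in nbhd E s :\ u].

Lemma contract_star_edges X E s u :
  (forall e, e \in E -> #|e| = 2 /\ e \subset X) -> u \in nbhd E s ->
  forall e, e \in contract_star E s u -> #|e| = 2 /\ e \subset X :\ s.
Proof.
move=> EX uN e; rewrite inE => /orP[|/imsetP[x]].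
  rewrite inE => /andP[eE se]; have [e2 eX] := EX e eE; split => //.
  apply/subsetP => x xe; rewrite !inE (subsetP eX) // andbT.
  by apply: contraNneq se => <-.
rewrite in_setD1 => /andP[xu xN] ->; split; first by rewrite cards2 eq_sym xu.
have vX v : v \in nbhd E s -> v \in X.
  by rewrite inE => /andP[_ /EX[_ /subsetP]]; apply; rewrite set22.
by apply/subsetP => v /set2P[]->; rewrite in_setD1 ?(nbhd_neq uN) ?(nbhd_neq xN) ?vX.
Qed.

Lemma contract_star_connect E s u x y :
  u \in nbhd E s -> x != s -> y != s -> connect (adj E) x y ->
  connect (adj (contract_star E s u)) x y.
Proof.
move=> uN xs ys; pose f z := if z == s then u else z.
suff /connect_homo/(_ x y) : forall x y, adj E x y ->
    connect (adj (contract_star E s u)) (f x) (f y).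
  by rewrite /f (negbTE xs) (negbTE ys).
have u_to z : z \in nbhd E s -> connect (adj (contract_star E s u)) u z.
  move=> zN; case: (eqVneq z u) => [->|zu]; first exact: connect0.
  apply: connect1; rewrite /adj eq_sym zu !inE; apply/orP; right.
  by apply/imsetP; exists z; rewrite // in_setD1 zu.
move=> {xs ys} {}x {}y xyE; rewrite /f.
case: (eqVneq x s) => [xs|xs]; case: (eqVneq y s) => [ys|ys].
- by rewrite /adj xs ys eqxx in xyE.
- by apply: u_to; rewrite inE -xs.
- by rewrite connect_adj_sym; apply: u_to; rewrite inE adj_sym -ys.
apply: connect1; case/andP: xyE => xy xyE; rewrite /adj xy !inE xyE /=.
by apply/orP; left; rewrite negb_or !(eq_sym s) xs ys.
Qed.

End Graphs.

Section Steiner.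
Variables (R : realFieldType) (V : finType) (d : V -> V -> R) (T : {set V}).

Lemma steiner_contract_star (G : subgraph V) s u :
  is_steiner T G -> s \notin T -> u \in nbhd G.2 s ->
  exists2 F : {set {set V}},
    F \subset contract_star G.2 s u & is_steiner T (G.1 :\ s, F).
Proof.
move=> [[_ GE Gconn _] TG] sT uN.
have uG : u \in G.1 :\ s.
  rewrite in_setD1 (nbhd_neq uN); move: uN; rewrite inE => /andP[_ /GE[_ /subsetP]].
  by apply; rewrite set22.
have [||F FE Ftree] :=
  connected_spanning_tree (X := G.1 :\ s) _ (contract_star_edges GE uN).
- by apply/set0Pn; exists u.
- move=> x y; rewrite !inE => /andP[xs xG] /andP[ys yG].
  exact: contract_star_connect uN xs ys (Gconn x y xG yG).
exists F => //; split => //; apply/subsetP => x xT.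
by rewrite !inE (subsetP TG) // andbT; apply: contraNneq sT => <-.
Qed.

Lemma stable_cheaper_eq gamma (OPT G : subgraph V) (c : {set V} -> R) :
  1 <= gamma -> stable d T gamma -> min_steiner T (edge_len d) OPT ->
  perturbation d gamma c -> is_steiner T G -> weight c G <= weight c OPT ->
  G = OPT.
Proof.
move=> g1 [O [_ Ouniq]] OPTmin cpert Gst GO.
have len_pert : perturbation d gamma (edge_len d).
  by move=> u v _; rewrite lexx ler_peMl ?edge_len_ge0.
have OPT_O : OPT = O := Ouniq _ len_pert _ OPTmin.
have [M Mst Mmin] := ex_minimizer (weight c) OPTmin.1.
have M_O : M = O := Ouniq _ cpert _ (conj Mst Mmin).
rewrite OPT_O; apply: (Ouniq _ cpert); split => // G' G'st.
by apply: le_trans GO _; rewrite OPT_O -M_O; apply: Mmin.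
Qed.

Definition scale_star gamma (s : V) (e : {set V}) : R :=
  if s \in e then gamma * edge_len d e else edge_len d e.

Lemma scale_star_perturbation gamma s :
  1 <= gamma -> perturbation d gamma (scale_star gamma s).
Proof.
move=> g1 u v _; have ler_len := ler_peMl (edge_len_ge0 d [set u; v]) g1.
by rewrite /scale_star; case: ifP; rewrite ?lexx ?ler_len.
Qed.

Lemma weight_scale_star gamma (G : subgraph V) s :
  is_metric d -> (forall e, e \in G.2 -> #|e| = 2) ->
  weight (scale_star gamma s) G =
  \sum_(e in G.2 | s \notin e) edge_len d e
    + gamma * \sum_(x in nbhd G.2 s) d s x.
Proof.
move=> dmet E2; rewrite /weight (bigID (fun e : {set V} => s \in e)) /= addrC.
congr (_ + _).
  by apply: eq_bigr => e /andP[_ /negbTE se]; rewrite /scale_star se.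
rewrite mulr_sumr [LHS](eq_bigl (fun e => e \in [set e in G.2 | s \in e])); last first.
  by move=> e; rewrite inE.
rewrite edges_at_nbhd // big_imset /=; last by move=> x y _ _; apply: set2_inj.
by apply: eq_bigr => x _; rewrite /scale_star set21 edge_len_set2.
Qed.

Lemma weight_contract_star_le gamma (E F : {set {set V}}) X s u :
  is_metric d -> u \in nbhd E s -> F \subset contract_star E s u ->
  weight (scale_star gamma s) (X, F) <=
  \sum_(e in E | s \notin e) edge_len d e
    + \sum_(x in nbhd E s :\ u) (d s u + d s x).
Proof.
move=> dmet uN FE; have us := nbhd_neq uN.
have sF e : e \in contract_star E s u -> s \notin e.
  rewrite inE => /orP[|/imsetP[x]]; first by rewrite inE => /andP[].
  rewrite in_setD1 => /andP[_ /nbhd_neq xs] ->.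
  by rewrite !inE negb_or !(eq_sym s) us xs.
rewrite /weight (eq_bigr (edge_len d)); last first.
  by move=> e /(subsetP FE)/sF/negbTE se; rewrite /scale_star se.
apply: le_trans (ler_sum_subsetU _ FE) _; first exact: edge_len_ge0.
apply: lerD; first by rewrite big_set.
rewrite big_imset /=; last by move=> x y _ _; apply: set2_inj.
apply: ler_sum => x _; rewrite edge_len_set2 //.
by case: dmet => _ _ dC dtri; rewrite (dC s u); apply: dtri.
Qed.

End Steiner.

Lemma star_cost_le (R : realFieldType) (gamma m S : R) (J : nat) :
  1 <= gamma -> 0 <= m -> m *+ J <= S -> J.+1%:R <= 2 / (2 - gamma) ->
  m *+ J + S <= gamma * (m + S).
Proof.
rewrite -[m *+ J]mulr_natl -natr1; set j := J%:R => g1 m0 jmS hk.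
have j0 : 0 <= j := ler0n _ J.
have k_bound : (j + 1) * (2 - gamma) <= 2.
  case: (ltrP gamma 2) => g2; first by rewrite -ler_pdivlMr ?subr_gt0.
  by nra.
(* The gap [gamma * (m + S) - (j * m + S)] is exactly the sum of these two terms. *)
have S_gap : 0 <= (gamma - 1) * (S - j * m) by apply: mulr_ge0; lra.
have m_gap : 0 <= m * (2 - (j + 1) * (2 - gamma)) by apply: mulr_ge0; lra.
nra.
Qed.

Theorem mainTheorem5 (R : realFieldType) (V : finType) (d : V -> V -> R)
  (T : {set V}) (gamma : R) (OPT : subgraph V) :
  is_metric d -> T != set0 -> 1 < gamma ->
  stable d T gamma -> min_steiner T (edge_len d) OPT ->
  forall s, s \in OPT.1 -> s \notin T ->
    2 / (2 - gamma) < (deg OPT s)%:R.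
Proof.
move=> dmet T0 /ltW g1 stab OPTmin s sO sT.
have [[[_ OPTE OPTconn _] TO] _] := OPTmin.
have E2 e : e \in OPT.2 -> #|e| = 2 by case/OPTE.
have [t tT] := set0Pn _ T0.
have ts : t != s by apply: contraNneq sT => <-.
have [u0 u0N] := set0Pn _ (nbhd_nonempty ts (OPTconn s t sO (subsetP TO t tT))).
have [u uN u_min] := arg_minP (d s) u0N.
have [F Fsub Fst] := steiner_contract_star OPTmin.1 sT uN.
rewrite deg_nbhd // (cardsD1 u) (uN : u \in _) ltNge; apply/negP => hk.
suff /(congr1 (fun G : subgraph V => s \in G.1)) : (OPT.1 :\ s, F) = OPT.
  by rewrite /= sO !inE eqxx.
apply: (stable_cheaper_eq g1 stab OPTmin (scale_star_perturbation d s g1) Fst).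
apply: le_trans (weight_contract_star_le _ _ dmet uN Fsub) _.
rewrite weight_scale_star // lerD2l (big_setD1 u uN) big_split sumr_const /=.
apply: star_cost_le => //; first by case: dmet.
by rewrite -sumr_const; apply: ler_sum => x /setD1P[_ /u_min].
Qed.
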